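(* Let $(\Omega,\Sigma,\mathbb{P})$ be a probability space and let $X_t:\Omega\to[0,\infty)$, $t\in\mathbb{N}$, be random variables such that $A:=\limsup_{t\to\infty}(E[X_t])^{1/t}<1$. For $\varepsilon>0$ let $\tau_\varepsilon:=\inf\{t\in\mathbb{N}: X_t<\varepsilon\}$. Then $$\limsup_{\varepsilon\to0^+}\frac{E[\tau_\varepsilon]}{|\log\varepsilon|}\leq\frac{-1}{\log A}.$$
   Context: Convention: if $E[X_t]=\infty$ then $(E[X_t])^{1/t}:=\infty$; if $A=0$ then $\frac{-1}{\log A}:=0$. $\log$ is the natural logarithm. *)

From HB Require Import structures.
From mathcomp Require Import all_boot all_order all_algebra.
From mathcomp Require Import all_classical all_reals all_analysis.
Set Implicit Arguments. Unset Strict Implicit. Unset Printing Implicit Defensive.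
Import Order.TTheory GRing.Theory Num.Theory numFieldTopology.Exports numFieldNormedType.Exports.
Local Open Scope classical_set_scope.
Local Open Scope ring_scope.

(* Hitting time tau_eps(w) = inf {t in N | X_t(w) < eps}, valued in \bar R
   (inf of the empty set is +oo). *)
Definition hitting_time {T : Type} {R : realType} (X : nat -> T -> R) (eps : R)
  (w : T) : \bar R :=
  ereal_inf [set (t%:R)%:E | t in [set t : nat | X t w < eps]].

Definition neg_inv_log {R : realType} (A : \bar R) : \bar R :=
  if A == 0%E then 0%E else ((-1) / ln (fine A))%:E.

From HB Require Import structures.
From mathcomp Require Import all_boot all_order all_algebra.
From mathcomp Require Import all_classical all_reals all_analysis.
From mathcomp Require Import measurable_realfun.
Import Order.TTheory GRing.Theory Num.Theory numFieldTopology.Exports numFieldNormedType.Exports.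
Local Open Scope classical_set_scope.
Local Open Scope ring_scope.

(* Fix a in (A, 1); eventually E[X_t] <= a^t.  Bounding the indicator of
   [X_k >= eps] by 1 for k < M and by X_k / eps for k >= M gives
   E[tau_eps] <= M + sum_(k >= M) a^k / eps, and choosing M with a^M <= eps,
   i.e. M ~ log eps / log a, yields E[tau_eps] <= log eps / log a + O(1).
   Dividing by |log eps| and letting a decrease to A gives the bound. *)

Section hitting_time.
Context {T : Type} {R : realType} (X : nat -> T -> R).
Local Open Scope ereal_scope.

Lemma hitting_time_ge0 eps w : 0 <= hitting_time X eps w.
Proof. by apply: le_ereal_inf_tmp => _ [t _ <-]; rewrite lee_fin. Qed.

Lemma hitting_time_le_nneseries (eps : R) (w : T) (h : nat -> \bar R) :
  (forall k, 0 <= h k) -> (forall k, (eps <= X k w)%R -> 1 <= h k) ->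
  hitting_time X eps w <= \sum_(0 <= k <oo) h k.
Proof.
move=> h0 h1.
have : 0 <= \sum_(0 <= k <oo) h k by apply: nneseries_ge0.
case ES : (\sum_(0 <= k <oo) h k) => [s| |] //; last by move=> _; rewrite leey.
rewrite lee_fin => s0; have /andP[trunc_le trunc_gt] := truncn_itv s0.
pose n := (Num.Def.trunc s).+1.
have [[k kn Xk]|none_hit] :=
  pselect (exists2 k, (k < n)%N & (X k w < eps)%R).
  apply: (@le_trans _ _ k%:R%:E); first by apply: ereal_inf_lbound; exists k.
  by rewrite lee_fin (le_trans _ trunc_le)// ler_nat -ltnS.
have : n%:R%:E <= \sum_(0 <= k <oo) h k.
  apply: le_trans (nneseries_lim_ge n _) => //.
  rewrite -[n in n%:R]subn0 -sumr_const_nat -sumEFin !big_mkord.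
  apply: lee_sum => i _; apply: h1; rewrite leNgt; apply/negP => Xi.
  by apply: none_hit; exists i.
by rewrite ES lee_fin => /(lt_le_trans trunc_gt); rewrite ltxx.
Qed.

End hitting_time.

(* The integral of a non-measurable nonnegative function is still defined,
   as a supremum over the simple functions below it, hence monotone; this
   matters because the hitting time is not known to be measurable. *)
Lemma ge0_le_integralT d (T : measurableType d) (R : realType)
    (mu : {measure set T -> \bar R}) (f g : T -> \bar R) :
  (forall x, 0 <= f x)%E -> (forall x, f x <= g x)%E ->
  (\int[mu]_x f x <= \int[mu]_x g x)%E.
Proof.
move=> f0 fg; have g0 x : (0 <= g x)%E by apply: le_trans (f0 x) (fg x).
rewrite !ge0_integralTE//; apply: ereal_sup_le => _ [h hf <-]; exists h => //.
by move=> x; apply: le_trans (hf x) (fg x).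
Qed.

Lemma limn_esup_lt_near (R : realType) (u : (\bar R)^nat) (l : \bar R) :
  (limn_esup u < l)%E -> \forall n \near \oo, (u n < l)%E.
Proof.
rewrite /limn_esup limf_esupE => /ereal_inf_lt[_ [V [N _ VN] <-]] supVl.
exists N => // n Nn; apply: le_lt_trans supVl.
by apply: ereal_sup_ubound; exists n => //; apply: VN.
Qed.

Lemma limf_esup_le_near {T : choiceType} {X : filteredType T} {R : realType}
    (F : set_system X) (f : X -> \bar R) (l : \bar R) :
  (\forall x \near F, (f x <= l)%E) -> (limf_esup f F <= l)%E.
Proof.
move=> fl; rewrite limf_esupE; apply: le_trans (ereal_inf_lbound _) _.
  by exists [set x | (f x <= l)%E].
by apply: ge_ereal_sup => _ [x /= fxl <-].
Qed.

Lemma poweR_invn_lt_le_expr (R : realType) (y : \bar R) (a : R) (t : nat) :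
  (0 <= y)%E -> (0 < t)%N -> 0 <= a ->
  (poweR y t%:R^-1 < a%:E)%E -> (y <= (a ^+ t)%:E)%E.
Proof.
move=> + t0 a0; have tV0 : (t%:R : R)^-1 != 0 by rewrite invr_eq0 pnatr_eq0 -lt0n.
case: y => [y| |] //; last by rewrite poweRyr// ltNge leey.
rewrite !lee_fin poweR_EFin lte_fin => y0 ya.
have -> : y = (y `^ t%:R^-1) `^ t%:R.
  by rewrite -powRrM mulVf ?powRr1// -invr_eq0.
by rewrite -powR_mulrn// ge0_ler_powR// ?nnegrE ?powR_ge0// ltW.
Qed.

Lemma geometric_tail_div_le (R : realType) (a eps : R) (M n : nat) :
  0 < a < 1 -> 0 < eps -> a ^+ M <= eps ->
  \sum_(M <= i < n) (a ^+ i / eps) <= (1 - a)^-1.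
Proof.
move=> /andP[a0 a1] eps0 aM.
have [Mn|nM] := leqP M n; last by rewrite big_geq ?invr_ge0 ?subr_ge0 ?ltW// ltnW.
rewrite -mulr_suml -(subnKC Mn) geometric_partial_tail ler_pdivrMr//.
have := @geometric_le_lim R (n - M) (a ^+ M) a (exprn_ge0 _ (ltW a0)) a0.
rewrite gtr0_norm// => /(_ a1) /le_trans; apply.
by rewrite mulrC ler_wpM2l// invr_ge0 subr_ge0 ltW.
Qed.

Section expected_hitting_time.
Context d (T : measurableType d) (R : realType) (P : probability T R)
  (X : nat -> T -> R).
Hypotheses (mX : forall t, measurable_fun setT (X t))
  (X_ge0 : forall t w, 0 <= X t w).
Local Open Scope ereal_scope.

Lemma expectation_hitting_time_le_nneseries (M : nat) (eps : R) : (0 < eps)%R ->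
  \int[P]_w hitting_time X eps w <=
  \sum_(0 <= k <oo) (if (k < M)%N then 1 else \int[P]_w (X k w / eps)%:E).
Proof.
move=> eps0; pose h k : T -> \bar R :=
  if (k < M)%N then cst 1 else fun w => (X k w / eps)%:E.
have h_ge0 k w : 0 <= h k w.
  by rewrite /h; case: ifP => _ /=; rewrite ?lee01// lee_fin divr_ge0// ltW.
have mh k : measurable_fun [set: T] (h k).
  rewrite /h; case: ifP => _; first exact: measurable_cst.
  apply/measurable_EFinP; exact: (measurable_funM (mX k) (measurable_cst _)).
apply: (@le_trans _ _ (\int[P]_w \sum_(0 <= k <oo) h k w)).
  apply: ge0_le_integralT => [w|w]; first exact: hitting_time_ge0.
  apply: hitting_time_le_nneseries => // k Xk; rewrite /h; case: ifP => _ //.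
  by rewrite lee_fin ler_pdivlMr// mul1r.
rewrite integral_nneseries//; apply: lee_nneseries => [k _ _|k _].
  by apply: integral_ge0 => w _.
rewrite /h; case: ifP => _ //.
by rewrite /= integral_cst// mul1e probability_le1.
Qed.

Lemma expectation_hitting_time_le (a eps : R) (M : nat) :
  (0 < a < 1)%R -> (0 < eps)%R -> (a ^+ M <= eps)%R ->
  (forall t, (M <= t)%N -> \int[P]_w (X t w)%:E <= (a ^+ t)%:E) ->
  \int[P]_w hitting_time X eps w <= (M%:R + (1 - a)^-1)%:E.
Proof.
move=> a01 eps0 aM EX.
apply: le_trans (expectation_hitting_time_le_nneseries M eps eps0) _.
have int_le k : (M <= k)%N -> \int[P]_w (X k w / eps)%:E <= (a ^+ k / eps)%:E.
  move=> Mk; under eq_integral do rewrite EFinM.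
  rewrite ge0_integralZr//; last 3 first.
  - exact/measurable_EFinP.
  - by move=> w _; rewrite lee_fin.
  - by rewrite lee_fin invr_ge0 ltW.
  by rewrite EFinM lee_wpmul2r ?EX// lee_fin invr_ge0 ltW.
apply: lime_le.
  apply: is_cvg_nneseries => k _ _; case: ifP => _ //.
  by apply: integral_ge0 => w _; rewrite lee_fin divr_ge0// ltW.
near=> n; have Mn : (M <= n)%N by near: n; exists M.
rewrite (big_cat_nat (leq0n M) Mn) /= EFinD; apply: leeD.
  rewrite (@eq_big_nat _ _ _ 0 M _ (fun=> 1%:E)); last by move=> k /andP[_ ->].
  by rewrite sumEFin sumr_const_nat subn0.
apply: (@le_trans _ _ (\sum_(M <= k < n) (a ^+ k / eps)%:E)%E).
  rewrite big_nat_cond [leRHS]big_nat_cond; apply: lee_sum => k /andP[/andP[Mk _] _].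
  by rewrite ltnNge Mk int_le.
by rewrite sumEFin lee_fin geometric_tail_div_le.
Unshelve. all: by end_near.
Qed.

Lemma expectation_hitting_time_le_log (a eps : R) (t0 : nat) :
  (0 < a < 1)%R -> (0 < eps <= 1)%R ->
  (forall t, (t0 <= t)%N -> \int[P]_w (X t w)%:E <= (a ^+ t)%:E) ->
  \int[P]_w hitting_time X eps w <=
    (ln eps / ln a + t0%:R + 1 + (1 - a)^-1)%:E.
Proof.
move=> /andP[a0 a1] /andP[eps0 eps1] EX.
have lna0 : (ln a < 0)%R by rewrite ln_lt0// a0.
have x_ge0 : (0 <= ln eps / ln a)%R.
  by rewrite mulr_le0 ?ln_le0// invr_le0 ltW.
have /andP[trunc_le x_lt] := truncn_itv x_ge0.
pose N := (Num.Def.trunc (ln eps / ln a)).+1.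
have aN : (a ^+ N <= eps)%R.
  rewrite -ler_ln ?posrE ?exprn_gt0// lnXn// -mulr_natl -(ler_ndivrMr _ _ lna0).
  exact: ltW.
apply: le_trans (@expectation_hitting_time_le a eps (t0 + N) _ eps0 _ _) _.
- by rewrite a0.
- by apply: le_trans aN; rewrite ler_wiXn2l ?ltW// leq_addl.
- by move=> t /(leq_trans (leq_addr _ _)); apply: EX.
rewrite lee_fin natrD lerD2r [leRHS]addrAC [leLHS]addrC lerD2r.
by rewrite /N -addn1 natrD lerD2r.
Qed.

Lemma limf_esup_hitting_time_le (a : R) : (0 < a < 1)%R ->
  limn_esup (fun t : nat => poweR (\int[P]_w (X t w)%:E) t%:R^-1) < a%:E ->
  limf_esup (fun eps : R =>
      \int[P]_w hitting_time X eps w * (`|ln eps|^-1)%:E) 0^'+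
    <= ((- ln a)^-1)%:E.
Proof.
move=> a01 /limn_esup_lt_near[N _ EX_root].
have /andP[a0 a1] := a01.
pose t0 := maxn N 1.
have EX t : (t0 <= t)%N -> \int[P]_w (X t w)%:E <= (a ^+ t)%:E.
  rewrite geq_max => /andP[Nt t_gt0]; apply: poweR_invn_lt_le_expr (ltW a0) _ => //.
    by apply: integral_ge0 => w _; rewrite lee_fin.
  exact: EX_root.
pose C := (t0%:R + 1 + (1 - a)^-1)%R.
have C0 : (0 < C)%R by rewrite ltr_wpDr ?invr_ge0 ?subr_ge0 ?ltW// ltr_wpDl.
have lna0 : (ln a < 0)%R by rewrite ln_lt0.
apply/lee_addgt0Pr => delta delta0; apply: (@limf_esup_le_near _ _ _ 0^'+).
near=> eps.
have eps0 : (0 < eps)%R by near: eps; exact: nbhs_right_gt.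
have eps_small : (eps < expR (- (C / delta)))%R.
  by near: eps; apply: nbhs_right_lt; exact: expR_gt0.
have L_large : (C / delta < - ln eps)%R.
  by rewrite ltrNr -[ltRHS]expRK ltr_ln ?posrE ?expR_gt0.
have L0 : (0 < - ln eps)%R by rewrite (lt_trans _ L_large)// divr_gt0.
have eps1 : (eps <= 1)%R.
  by rewrite ltW// (lt_le_trans eps_small)// expR_le1 oppr_le0 divr_ge0 ?ltW.
rewrite ltr0_norm -?oppr_gt0//.
apply: le_trans
  (lee_wpmul2r _ (@expectation_hitting_time_le_log a eps t0 a01 _ EX)) _.
- by rewrite lee_fin invr_ge0 ltW.
- by rewrite eps0.
have -> : (ln eps / ln a + t0%:R + 1 + (1 - a)^-1 = ln eps / ln a + C)%R.
  by rewrite /C !addrA.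
have log_ratio : (ln eps / ln a / - ln eps = (- ln a)^-1)%R.
  by rewrite mulrAC invrN mulrN divff ?mulN1r ?invrN// ltr0_neq0// -oppr_gt0.
rewrite -EFinM lee_fin mulrDl log_ratio lerD2l ler_pdivrMr// -ler_pdivrMl// mulrC.
exact: ltW.
Unshelve. all: by end_near.
Qed.

End expected_hitting_time.

Lemma le_neg_inv_log (R : realType) (A l : \bar R) : (0 <= A)%E -> (A < 1)%E ->
  (forall a : R, 0 < a < 1 -> (A < a%:E)%E -> (l <= ((- ln a)^-1)%:E)%E) ->
  (l <= neg_inv_log A)%E.
Proof.
case: A => [r| |] //; rewrite lee_fin lte_fin => r0 r1 l_le.
pose c := if r == 0 then 0 else - (ln r)^-1.
have -> : neg_inv_log r%:E = c%:E.
  by rewrite /neg_inv_log eqe /c; case: eqP => // _; rewrite mulN1r.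
have c0 : 0 <= c.
  rewrite /c; case: eqP => [//|/eqP r_neq0].
  by rewrite oppr_ge0 invr_le0 ln_le0 ?ltW.
apply/lee_addgt0Pr => delta delta0; pose s := c + delta.
have s0 : 0 < s by rewrite ltr_wpDl.
apply: le_trans (l_le (expR (- s^-1)) _ _) _.
- by rewrite expR_gt0 expR_lt1 oppr_lt0 invr_gt0.
- rewrite lte_fin; have [->|r_neq0] := eqVneq r 0; first exact: expR_gt0.
  have r_gt0 : 0 < r by rewrite lt0r r_neq0.
  have lnr0 : 0 < - ln r by rewrite oppr_gt0 ln_lt0// r_gt0.
  rewrite -[r]lnK ?posrE// ltr_expR ltrNr -(invrK (- ln r)) ltf_pV2 ?posrE ?invr_gt0//.
  by rewrite invrN /s /c (negbTE r_neq0) ltrDl.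
- by rewrite expRK opprK invrK EFinD.
Qed.

Theorem theorem2 (d : measure_display) (T : measurableType d) (R : realType)
  (P : probability T R) (X : nat -> T -> R)
  (mX : forall t, measurable_fun setT (X t))
  (X_ge0 : forall t w, 0 <= X t w)
  (hA : (limn_esup (fun t : nat =>
           poweR (\int[P]_w (X t w)%:E) (t%:R^-1)) < 1)%E) :
  (@limf_esup R R R (fun eps : R =>
      (\int[P]_w hitting_time X eps w) * (`|ln eps|^-1)%:E)%E (0 : R)^'+
   <= neg_inv_log (limn_esup (fun t : nat =>
           poweR (\int[P]_w (X t w)%:E) (t%:R^-1))))%E.
Proof.
apply: le_neg_inv_log hA _ => [|a a01 A_lt_a].
  apply: limf_esup_ge0; first exact: filter_not_empty.
  by move=> t; exact: poweR_ge0.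
exact: limf_esup_hitting_time_le.
Qed.
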